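(* Assume Case 2 holds, $d=0$ and $\delta<T_{s-1}$. Then for every $n\ge1$, $Q^n$ contains the term $z^{\gamma_n}$ (where $\gamma_n=\gamma\delta^{n-1}$), and $w_l(Q^n)=\gamma_n$ for every $l\in[l_1,\alpha]$. Moreover, for every $n\ge2$, either $N(Q^n)=\{(x,y):x\ge\gamma_n,y\ge0\}$, or the edge of $N(Q^n)$ whose right endpoint is the vertex $(\gamma_n,0)$ has slope strictly less than $-l_1^{-1}$ (i.e. it is strictly steeper than the edge of $N(q)$ ending at $(\gamma,0)$).
   Context: Let $f(z,w)=(p(z),q(z,w))$ be a holomorphic skew product germ at the origin of $\mathbb{C}^2$ with $f(0,0)=(0,0)$, where $p(z)=a_\delta z^\delta+O(z^{\delta+1})$ with $a_\delta\neq0$ and integer $\delta\ge1$, and $q(z,w)=\sum_{i+j\ge1}b_{ij}z^iw^j$ is not identically zero. For $n\ge1$ write $f^n=(p^n,Q^n)$. For a nonzero germ $g=\sum g_{ij}z^iw^j$, say $g$ contains $z^aw^b$ if $g_{ab}\ne0$, and for real $l>0$ let $w_l(g)=\min\{i+lj: g_{ij}\neq0\}$. The Newton polygon $N(g)$ is the convex hull of $\bigcup_{g_{ij}\neq0}\{(x,y):x\ge i,\ y\ge j\}$. Let $(n_1,m_1),\dots,(n_s,m_s)$ be the vertices of $N(q)$ with $n_1<\cdots<n_s$, $m_1>\cdots>m_s$; for $1\le k\le s-1$ let $T_k$ be the $y$-intercept of the line through $(n_k,m_k)$ and $(n_{k+1},m_{k+1})$. Case 2 means: $s>1$ and $\delta\le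 T_{s-1}$; set $(\gamma,d)=(n_s,m_s)$ and $l_1=\frac{n_s-n_{s-1}}{m_{s-1}-m_s}$. Let $\alpha=\gamma/(\delta-d)$. *)

From HB Require Import structures.
From mathcomp Require Import all_boot all_order all_algebra.
From mathcomp.real_closed Require Import complex.
From mathcomp Require Import reals.
Set Implicit Arguments.
Unset Strict Implicit.
Unset Printing Implicit Defensive.
Import Order.TTheory GRing.Theory Num.Theory.
Local Open Scope ring_scope.

Section Germs.
Variable R : realType.
Local Notation C := (R[i]).

(* a formal power series in (z,w) : coefficient of z^i w^j *)
Definition ser2 := nat -> nat -> C.
Definition ser1 := nat -> C.

(* convergent power series (holomorphic germ at 0): Cauchy-type bound
   |c_ij| rho^(i+j) <= M for some rho > 0 (rho, M are taken in C; the
   order of C forces them to be real), i.e. the series converges on a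
   polydisc around 0 *)
Definition convergent2 (g : ser2) : Prop :=
  exists (M rho : C), 0 < rho /\ forall i j, `|g i j| * rho ^+ (i + j) <= M.
Definition convergent1 (g : ser1) : Prop :=
  exists (M rho : C), 0 < rho /\ forall i, `|g i| * rho ^+ i <= M.

Definition smul (f g : ser2) : ser2 := fun a b =>
  \sum_(i < a.+1) \sum_(j < b.+1) f i j * g (a - i)%N (b - j)%N.
Definition sone : ser2 := fun a b => if (a == 0%N) && (b == 0%N) then 1 else 0.
Definition spow (f : ser2) (k : nat) : ser2 := iter k (smul f) sone.

(* composition g(u(z,w), v(z,w)), for u, v without constant term: only
   the terms g_ij with i + j <= a + b contribute to the coefficient (a,b) *)
Definition scomp (g u v : ser2) : ser2 := fun a b =>
  \sum_(i < (a + b).+1) \sum_(j < (a + b).+1)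
     g i j * smul (spow u i) (spow v j) a b.

Definition lift1 (p : ser1) : ser2 := fun i j => if j == 0%N then p i else 0.

Definition sZ : ser2 := fun i j => if (i == 1%N) && (j == 0%N) then 1 else 0.
Definition sW : ser2 := fun i j => if (i == 0%N) && (j == 1%N) then 1 else 0.

(* f^n = (p^n, Q^n), with f^0 = id and f^(n+1) = f o f^n *)
Fixpoint iterf (p : ser1) (q : ser2) (n : nat) : ser2 * ser2 :=
  match n with
  | 0 => (sZ, sW)
  | k.+1 => let F := iterf p q k in
            (scomp (lift1 p) F.1 F.2, scomp q F.1 F.2)
  end.

Definition Qn (p : ser1) (q : ser2) (n : nat) : ser2 := (iterf p q n).2.

(* Newton polygon: convex hull of the union of the quadrants
   {x >= i, y >= j} over the support of g (finite convex combinations) *)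
Definition newton (g : ser2) (x y : R) : Prop :=
  exists (k : nat) (lam : 'I_k -> R) (px py : 'I_k -> R),
    (forall t, 0 <= lam t) /\ \sum_(t < k) lam t = 1 /\
    (forall t, exists i j : nat, g i j != 0 /\ (i%:R <= px t) /\ (j%:R <= py t)) /\
    x = \sum_(t < k) lam t * px t /\ y = \sum_(t < k) lam t * py t.

Definition is_vertex (g : ser2) (x y : R) : Prop :=
  newton g x y /\
  forall (x1 y1 x2 y2 t : R), newton g x1 y1 -> newton g x2 y2 ->
    0 < t < 1 -> x = t * x1 + (1 - t) * x2 -> y = t * y1 + (1 - t) * y2 ->
    x1 = x2 /\ y1 = y2.

Definition wl_eq (g : ser2) (l v : R) : Prop :=
  (exists i j : nat, g i j != 0 /\ i%:R + l * j%:R = v) /\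
  (forall i j : nat, g i j != 0 -> v <= i%:R + l * j%:R).

Definition yintercept (n1 m1 n2 m2 : R) : R :=
  m1 - (m2 - m1) / (n2 - n1) * n1.

End Germs.

From HB Require Import structures.
From mathcomp Require Import all_boot all_order all_algebra.
From mathcomp.real_closed Require Import complex.
From mathcomp Require Import reals.
From mathcomp Require Import zify ring lra.
From Stdlib Require Import Classical Wf_nat.
Import Order.TTheory GRing.Theory Num.Theory.
Local Open Scope ring_scope.
Set Implicit Arguments.
Unset Strict Implicit.

(* Put M = m_{s-1} and P = n_s - n_{s-1}, so that l_1 = P/M, and
   let gamma = n_s.  Since (gamma,0) is the last vertex of N(q) and the last edge
   has slope -M/P, q contains z^gamma and every monomial z^i w^j of q satisfies
   M i + P j >= M gamma; the hypothesis delta < T_{s-1} reads delta P < M gamma,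
   which gives delta i + gamma j >= delta gamma, strictly when j > 0.
   As f^(n+1) = f o f^n, we have Q^(n+1) = q(p^n, Q^n), where p^n depends on z
   only and starts with a nonzero multiple of z^(delta^n).  Tracking weighted
   orders of products and compositions, induction on n shows that Q^n contains
   z^gamma_n, that its monomials satisfy M i + P j >= M gamma_n (hence
   w_l(Q^n) = gamma_n for every l >= l_1), and that for n >= 2 this inequality
   is strict when j > 0.  Finally, if no monomial of Q^n lies left of
   x = gamma_n, then N(Q^n) is a quadrant; otherwise (gamma_n,0) is a vertex
   whose neighbouring vertex (a,b) is the support point of least slope
   b/(gamma_n - a), and the strict inequality says M (gamma_n - a) < P b. *)

Lemma ex_least_nat (P : nat -> Prop) :
  (exists n, P n) -> exists n, P n /\ forall m, P m -> (n <= m)%N.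
Proof.
move=> exP.
have [n [[Pn minn] _]] :=
  dec_inh_nat_subset_has_unique_least_element P (fun n => classic (P n)) exP.
by exists n; split=> // m /minn /ssrnat.leP.
Qed.

Section WeightedOrder.
Variable R : realType.
Local Notation C := (R[i]).
Implicit Types (f g u v : ser2 R).

Definition wbound g (A B c : nat) := forall i j, g i j != 0 -> (c <= A * i + B * j)%N.

Definition zonly g := forall i j, g i j != 0 -> j = 0%N.

Lemma sum_neq0_witness n (F : 'I_n -> C) : \sum_(i < n) F i != 0 -> exists i, F i != 0.
Proof.
case: (pickP (fun i => F i != 0)) => [i nz _|none]; first by exists i.
by rewrite big1 ?eqxx // => i _; apply/eqP/negbFE/none.
Qed.

Lemma smul_support f g a b : smul f g a b != 0 ->
  exists i j, [/\ (i <= a)%N, (j <= b)%N, f i j != 0 & g (a - i)%N (b - j)%N != 0].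
Proof.
rewrite /smul => /sum_neq0_witness [i /sum_neq0_witness [j H]].
exists i, j; split; [by rewrite -ltnS ltn_ord|by rewrite -ltnS ltn_ord| |].
- by apply: contraNneq H => ->; rewrite mul0r.
- by apply: contraNneq H => ->; rewrite mulr0.
Qed.

Lemma scomp_support g u v a b : scomp g u v a b != 0 ->
  exists i j, g i j != 0 /\ smul (spow u i) (spow v j) a b != 0.
Proof.
rewrite /scomp => /sum_neq0_witness [i /sum_neq0_witness [j H]].
exists i, j; split.
- by apply: contraNneq H => ->; rewrite mul0r.
- by apply: contraNneq H => ->; rewrite mulr0.
Qed.

Lemma wbound0 g A B : wbound g A B 0.
Proof. by []. Qed.

Lemma wbound_smul f g A B c1 c2 : wbound f A B c1 -> wbound g A B c2 ->
  wbound (smul f g) A B (c1 + c2).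
Proof.
move=> hf hg a b /smul_support [i [j [hi hj /hf h1 /hg h2]]].
move: (subnKC hi) (subnKC hj) h2; set x := (a - i)%N; set y := (b - j)%N.
move=> <- <-; rewrite !mulnDr; lia.
Qed.

Lemma wbound_spow f A B c k : wbound f A B c -> wbound (spow f k) A B (k * c).
Proof.
move=> hf; elim: k => [|k IH]; first by rewrite mul0n; apply: wbound0.
by rewrite mulSn; apply: wbound_smul.
Qed.

Lemma zonly_sone : zonly (@sone R).
Proof. by move=> i j; rewrite /sone; case: ifP => [/andP [_ /eqP]|]; rewrite ?eqxx. Qed.

Lemma zonly_smul f g : zonly f -> zonly g -> zonly (smul f g).
Proof.
move=> hf hg a b /smul_support [i [j [hi hj /hf h1 /hg h2]]]; lia.
Qed.

Lemma zonly_spow f k : zonly f -> zonly (spow f k).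
Proof.
move=> hf; elim: k => [|k IH]; first exact: zonly_sone.
exact: zonly_smul.
Qed.

Lemma wbound_zonly f e A B : zonly f -> wbound f 1 0 e -> wbound f A B (A * e).
Proof.
move=> hf ho i j nz; move: (ho _ _ nz); rewrite (hf _ _ nz) !muln0 !addn0 mul1n.
by move=> hei; rewrite leq_mul2l hei orbT.
Qed.

Lemma smul_spow_wbound u v i j a b A B cu cv :
  smul (spow u i) (spow v j) a b != 0 -> wbound u A B cu -> wbound v A B cv ->
  (i * cu + j * cv <= A * a + B * b)%N.
Proof.
move=> nz hu hv.
exact: (wbound_smul (wbound_spow (k:=i) hu) (wbound_spow (k:=j) hv) nz).
Qed.

Lemma smul_spow_zonly u v i a b :
  smul (spow u i) (spow v 0) a b != 0 -> zonly u -> b = 0%N.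
Proof.
move=> nz hu; exact: (zonly_smul (zonly_spow (k:=i) hu) zonly_sone nz).
Qed.

Lemma wbound_sW A B : wbound (@sW R) A B B.
Proof.
move=> i j; rewrite /sW.
by case: ifP => [/andP [/eqP -> /eqP ->] _|_]; [rewrite muln0 muln1 | rewrite eqxx].
Qed.

Lemma sum2_single n m (F : 'I_n -> 'I_m -> C) (i0 : 'I_n) (j0 : 'I_m) :
  (forall i j, (i != i0) || (j != j0) -> F i j = 0) ->
  \sum_i \sum_j F i j = F i0 j0.
Proof.
move=> H; rewrite (bigD1 i0) //= [X in _ + X]big1 ?addr0; last first.
  by move=> i hi; rewrite big1 // => j _; apply: H; rewrite hi.
rewrite (bigD1 j0) //= [X in _ + X]big1 ?addr0 // => j hj; by apply: H; rewrite hj orbT.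
Qed.

Lemma smul_sone f a b : smul f (@sone R) a b = f a b.
Proof.
rewrite /smul (sum2_single (i0 := ord_max) (j0 := ord_max)) /=.
  by rewrite !subnn /sone /= mulr1.
move=> i j hij; rewrite /sone.
have hi := ltn_ord i; have hj := ltn_ord j.
case: ifP => [/andP [/eqP h1 /eqP h2]|_]; last by rewrite mulr0.
have ei : i = ord_max by apply/val_inj => /=; lia.
have ej : j = ord_max by apply/val_inj => /=; lia.
by move: hij; rewrite ei ej !eqxx.
Qed.

Lemma spow_lead f e k : zonly f -> wbound f 1 0 e -> spow f k (k * e)%N 0 = f e 0 ^+ k.
Proof.
move=> hf ho; elim: k => [|k IH]; first by rewrite mul0n /= /sone /= expr0.
have he : (e < (k.+1 * e).+1)%N by rewrite mulSn; lia.
rewrite [LHS]/= /smul (sum2_single (i0 := Ordinal he) (j0 := ord0)) /=.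
  by rewrite mulSn addKn subn0 IH exprS.
move=> i j hij.
case: (eqVneq (f i j) 0) => [->|nz]; first by rewrite mul0r.
have j0 : j = ord0 by apply/val_inj; apply: hf nz.
rewrite j0 in nz *; have hie : (e <= i)%N by have := ho _ _ nz; rewrite mul1n muln0 addn0.
have hi : (i : nat) != e.
  by apply: contraTneq hij => ei; rewrite j0 eqxx orbF negbK; apply/eqP/val_inj.
case: (eqVneq (spow f k (k.+1 * e - i)%N (0 - 0)%N) 0) => [->|nz2]; first by rewrite mulr0.
have := wbound_spow (k:=k) ho nz2; rewrite mul1n muln0 addn0.
have := ltn_ord i; move: hi hie; move: (i : nat) => i' hi hie.
rewrite mulSn; lia.
Qed.

Lemma scomp_single g u v a b i0 j0 :
  (i0 <= a + b)%N -> (j0 <= a + b)%N ->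
  (forall i j, g i j != 0 -> smul (spow u i) (spow v j) a b != 0 -> i = i0 /\ j = j0) ->
  scomp g u v a b = g i0 j0 * smul (spow u i0) (spow v j0) a b.
Proof.
move=> hi hj H; rewrite -ltnS in hi; rewrite -ltnS in hj.
rewrite /scomp (sum2_single (i0 := Ordinal hi) (j0 := Ordinal hj)) // => i j hij.
case: (eqVneq (g i j) 0) => [->|nz]; first by rewrite mul0r.
case: (eqVneq (smul (spow u i) (spow v j) a b) 0) => [->|nz2]; first by rewrite mulr0.
by have [e1 e2] := H _ _ nz nz2; move: hij; rewrite -!val_eqE /= e1 e2 !eqxx.
Qed.

Lemma wbound_scomp g u v A B cu cv K :
  wbound u A B cu -> wbound v A B cv ->
  (forall i j, g i j != 0 -> (K <= i * cu + j * cv)%N) ->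
  wbound (scomp g u v) A B K.
Proof.
move=> hu hv hK a b /scomp_support [i [j [/hK h1 h2]]].
exact: leq_trans h1 (smul_spow_wbound h2 hu hv).
Qed.

(* when u is a series in z, the monomials of g(u,v) containing w come from
   the terms of g containing w *)
Lemma wbound_scomp_strict g u v A B cu cv K :
  zonly u -> wbound u A B cu -> wbound v A B cv ->
  (forall i j, g i j != 0 -> (0 < j)%N -> (K < i * cu + j * cv)%N) ->
  forall a b, scomp g u v a b != 0 -> (0 < b)%N -> (K < A * a + B * b)%N.
Proof.
move=> hu0 hu hv hK a b /scomp_support [i [j [h1 h2]]] hb.
case: (posnP j) => [j0|jpos].
  by rewrite j0 in h2; have := smul_spow_zonly h2 hu0; lia.
exact: leq_trans (hK _ _ h1 jpos) (smul_spow_wbound h2 hu hv).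
Qed.

Lemma zonly_scomp g u v : zonly g -> zonly u -> zonly (scomp g u v).
Proof.
move=> hg hu a b /scomp_support [i [j [h1 h2]]].
by rewrite (hg _ _ h1) in h2; exact: smul_spow_zonly h2 hu.
Qed.

Lemma scomp_lead g u v e c A B cv : (0 < e)%N ->
  zonly u -> wbound u 1 0 e -> wbound v A B cv ->
  (forall i, g i 0%N != 0 -> (c <= i)%N) ->
  (forall i j, g i j != 0 -> (0 < j)%N -> (A * (c * e) < i * (A * e) + j * cv)%N) ->
  scomp g u v (c * e) 0 = g c 0%N * u e 0%N ^+ c.
Proof.
move=> he hu0 hu hv hc hK.
rewrite (@scomp_single _ _ _ _ _ c 0%N); first last.
- move=> i j h1 h2; case: (posnP j) => [j0|jpos].
    rewrite j0 in h1 h2 *; split=> //; apply/eqP; rewrite eqn_leq hc // andbT.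
    have := smul_spow_wbound h2 hu (wbound0 (g:=v) 1 0).
    by rewrite muln0 !addn0 mul1n leq_pmul2r.
  have := smul_spow_wbound h2 (wbound_zonly A B hu0 hu) hv.
  by have := hK _ _ h1 jpos; rewrite muln0 addn0; lia.
- by [].
- by rewrite addn0 leq_pmulr.
by rewrite smul_sone spow_lead.
Qed.

End WeightedOrder.

Section Iterates.
Variable R : realType.
Variables (p : ser1 R) (q : ser2 R) (dl : nat).
Hypothesis dl_gt0 : (0 < dl)%N.
Hypothesis p_low : forall i, (i < dl)%N -> p i = 0.
Hypothesis p_lead : p dl != 0.

Lemma Qn0 : Qn p q 0 = @sW R.
Proof. by []. Qed.

Lemma QnS n : Qn p q n.+1 = scomp q (iterf p q n).1 (Qn p q n).
Proof. by []. Qed.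

Lemma lift1_zonly : zonly (lift1 p).
Proof. by move=> i j; rewrite /lift1; case: (eqVneq j 0%N) => [//|_]; rewrite eqxx. Qed.

Lemma lift1_order : wbound (lift1 p) 1 0 dl.
Proof.
move=> i j; rewrite mul0n addn0 mul1n leqNgt /lift1.
by case: (ltnP i dl) => [/p_low ->|//]; case: ifP; rewrite eqxx.
Qed.

Lemma pn_shape m :
  [/\ zonly (iterf p q m).1, wbound (iterf p q m).1 1 0 (dl ^ m)
    & (iterf p q m).1 (dl ^ m)%N 0%N != 0].
Proof.
elim: m => [|m [hu0 hu hl]].
  rewrite /= expn0; split.
  - by move=> i j; rewrite /sZ; case: ifP => [/andP [_ /eqP]|]; rewrite ?eqxx.
  - by move=> i j; rewrite /sZ; case: ifP => [/andP [/eqP -> /eqP ->]|]; rewrite ?eqxx.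
  - by rewrite /sZ /= oner_neq0.
have he : (0 < dl ^ m)%N by rewrite expn_gt0 dl_gt0.
rewrite /= expnS; split.
- exact: zonly_scomp lift1_zonly hu0.
- apply: wbound_scomp hu (wbound0 (g:=(iterf p q m).2) 1 0) _ => i j /lift1_order.
  by rewrite mul0n !addn0 mul1n muln0 addn0 leq_pmul2r.
rewrite (scomp_lead (A:=1) (B:=0) he hu0 hu (wbound0 (g:=(iterf p q m).2) 1 0)).
- by rewrite mulf_neq0 // expf_neq0.
- by move=> i /lift1_order; rewrite muln0 addn0 mul1n.
- by move=> i j /lift1_zonly ->.
Qed.

(* From now on N(q) lies above the line M x + P y = M gm through the monomial
   z^gm of q, and dl P < M gm (this is delta < T_(s-1)). *)
Variables (M P gm : nat).
Hypothesis M_gt0 : (0 < M)%N.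
Hypothesis q_l1 : forall i j, q i j != 0 -> (M * gm <= M * i + P * j)%N.
Hypothesis dl_lt_T : (dl * P < M * gm)%N.
Hypothesis q_lead : q gm 0%N != 0.

Lemma q_z_axis i : q i 0%N != 0 -> (gm <= i)%N.
Proof. by move=> /q_l1; rewrite muln0 addn0 leq_pmul2l. Qed.

(* combination of the line of the last edge with dl P < M gm *)
Lemma q_alpha_aux i j : q i j != 0 -> (M * (dl * gm) + j <= M * (dl * i + gm * j))%N.
Proof.
move=> /q_l1 h; have h1 := leq_mul (leqnn dl) h.
have h2 := leq_mul dl_lt_T (leqnn j); nia.
Qed.

Lemma q_alpha i j : q i j != 0 -> (dl * gm <= dl * i + gm * j)%N.
Proof. by move=> /q_alpha_aux h; rewrite -(leq_pmul2l M_gt0); lia. Qed.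

Lemma q_alpha_strict i j : q i j != 0 -> (0 < j)%N -> (dl * gm < dl * i + gm * j)%N.
Proof. by move=> /q_alpha_aux h hj; rewrite -(ltn_pmul2l M_gt0); lia. Qed.

(* w_alpha(Q^m) >= gm dl^(m-1), written with integer weights (dl, gm) *)
Lemma Qn_alpha m : wbound (Qn p q m) dl gm (gm * dl ^ m).
Proof.
elim: m => [|m IH].
  by rewrite Qn0 expn0 muln1; apply: wbound_sW.
have [hu0 hu _] := pn_shape m.
rewrite QnS; apply: wbound_scomp (wbound_zonly dl gm hu0 hu) IH _ => i j /q_alpha h.
have := leq_mul (leqnn (dl ^ m)) h; rewrite expnS; nia.
Qed.

Lemma Qn_lead m : Qn p q m.+1 (gm * dl ^ m)%N 0%N != 0.
Proof.
have [hu0 hu hl] := pn_shape m.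
have he : (0 < dl ^ m)%N by rewrite expn_gt0 dl_gt0.
rewrite QnS (scomp_lead (A:=dl) (B:=gm) he hu0 hu (Qn_alpha (m:=m))).
- by rewrite mulf_neq0 // expf_neq0.
- exact: q_z_axis.
move=> i j nz /(q_alpha_strict nz) h.
rewrite -(ltn_pmul2l he) in h; nia.
Qed.

(* w_(l1)(Q^(m+1)) >= gm dl^m, written with integer weights (M, P) *)
Lemma Qn_l1 m : wbound (Qn p q m.+1) M P (M * (gm * dl ^ m)).
Proof.
elim: m => [|m IH].
  have [hu0 hu _] := pn_shape 0.
  rewrite QnS Qn0; apply: wbound_scomp (wbound_zonly M P hu0 hu) (wbound_sW M P) _.
  by move=> i j /q_l1; rewrite expn0 !muln1; lia.
have [hu0 hu _] := pn_shape m.+1.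
rewrite QnS; apply: wbound_scomp (wbound_zonly M P hu0 hu) IH _ => i j /q_alpha h.
have := leq_mul (leqnn (M * dl ^ m)) h; rewrite expnS; nia.
Qed.

Lemma Qn_l1_strict m : forall a b, Qn p q m.+2 a b != 0 -> (0 < b)%N ->
  (M * (gm * dl ^ m.+1) < M * a + P * b)%N.
Proof.
have [hu0 hu _] := pn_shape m.+1.
rewrite QnS; apply: wbound_scomp_strict hu0 (wbound_zonly M P hu0 hu) (Qn_l1 (m:=m)) _.
move=> i j nz /(q_alpha_strict nz) h.
have hMm : (0 < M * dl ^ m)%N by rewrite muln_gt0 M_gt0 expn_gt0 dl_gt0.
rewrite -(ltn_pmul2l hMm) in h; rewrite expnS; nia.
Qed.

End Iterates.

Lemma scaled_slope_leq L x y b j : (0 < L)%N -> (0 < x)%N -> (0 < y)%N ->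
  (x %| L)%N -> (y %| L)%N ->
  (b * (L %/ x) <= j * (L %/ y))%N = (b * y <= j * x)%N.
Proof.
move=> hL hx hy /dvdnP [kx eLx] /dvdnP [ky eLy].
have hxy : (0 < x * y)%N by rewrite muln_gt0 hx hy.
rewrite {1}eLx {1}eLy !mulnK // -(leq_pmul2r hxy).
have -> : (b * kx * (x * y) = L * (b * y))%N by rewrite eLx; ring.
have -> : (j * ky * (x * y) = L * (j * x))%N by rewrite eLy; ring.
by rewrite leq_pmul2l.
Qed.

Section NewtonPolygon.
Variable R : realType.
Variable g : ser2 R.

Lemma newton_support i j : g i j != 0 -> newton g i%:R j%:R.
Proof.
move=> nz; exists 1%N, (fun _ => 1), (fun _ => i%:R), (fun _ => j%:R).
rewrite !big_ord1 !mul1r; split=> //; split=> //; split=> //.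
by move=> _; exists i, j.
Qed.

Lemma newton_halfplane (a b c : R) : 0 <= a -> 0 <= b ->
  (forall i j, g i j != 0 -> c <= a * i%:R + b * j%:R) ->
  forall x y, newton g x y -> c <= a * x + b * y.
Proof.
move=> ha hb H x y [k [lam [px [py [hl [hs [hp [-> ->]]]]]]]].
rewrite !mulr_sumr -big_split /= -[c]mulr1 -hs mulr_sumr.
apply: ler_sum => t _.
have [i [j [/H hc [hi hj]]]] := hp t.
have : c <= a * px t + b * py t.
  by apply: (le_trans hc); apply: lerD; apply: ler_wpM2l.
move=> h; have := hl t => h0.
rewrite !mulrA ![_ * lam t]mulrC -!mulrA -mulrDr; exact: ler_wpM2l.
Qed.

Lemma newton_above_chord i1 j1 i2 j2 (t c : R) : g i1 j1 != 0 -> g i2 j2 != 0 ->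
  0 <= t <= 1 -> 0 <= c ->
  newton g (t * i1%:R + (1 - t) * i2%:R) (t * j1%:R + (1 - t) * j2%:R + c).
Proof.
move=> n1 n2 /andP [t0 t1] c0.
exists 2%N, (fun k : 'I_2 => if val k == 0%N then t else 1 - t),
  (fun k : 'I_2 => if val k == 0%N then i1%:R else i2%:R),
  (fun k : 'I_2 => if val k == 0%N then j1%:R + c else j2%:R + c).
rewrite !big_ord_recl !big_ord0 /= !addr0; split.
  by move=> k; case: ifP => _; lra.
split; first by lra.
split; last by split=> //; ring.
move=> k; case: ifP => _.
  by exists i1, j1; split=> //; split=> //; lra.
by exists i2, j2; split=> //; split=> //; lra.
Qed.

Lemma convex_eq_lb (t X1 X2 c : R) : 0 < t < 1 -> c <= X1 -> c <= X2 ->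
  t * X1 + (1 - t) * X2 = c -> X1 = c /\ X2 = c.
Proof.
move=> /andP [t0 t1] h1 h2 e.
have a1 : 0 <= t * (X1 - c) by apply: mulr_ge0; lra.
have a2 : 0 <= (1 - t) * (X2 - c) by apply: mulr_ge0; lra.
have z1 : t * (X1 - c) = 0 by lra.
have z2 : (1 - t) * (X2 - c) = 0 by lra.
move: z1 z2 => /eqP; rewrite mulf_eq0 => /orP [/eqP|/eqP]; first lra.
move=> h3 /eqP; rewrite mulf_eq0 => /orP [/eqP|/eqP]; lra.
Qed.

Lemma vertex_of_lexmin (A B a b : nat) : g a b != 0 -> (0 < B)%N ->
  (forall i j, g i j != 0 -> (A * a + B * b <= A * i + B * j)%N) ->
  (forall i j, g i j != 0 -> (A * a + B * b)%N = (A * i + B * j)%N -> (a <= i)%N) ->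
  is_vertex g a%:R b%:R.
Proof.
move=> nz hB h1 h2; split; first exact: newton_support.
move=> x1 y1 x2 y2 t n1 n2 ht ex ey.
pose c1 : R := A%:R * a%:R + B%:R * b%:R.
have L1 : forall x y, newton g x y -> c1 <= A%:R * x + B%:R * y.
  apply: newton_halfplane => // i j nzij; rewrite /c1 -!natrM -!natrD ler_nat; exact: h1.
(* a tilted half-plane separating (a,b) from the rest of the line *)
have L2 : forall x y, newton g x y ->
    a%:R * c1 + a%:R <= (a%:R * A%:R + 1) * x + (a%:R * B%:R) * y.
  apply: newton_halfplane => //; first by apply: addr_ge0 => //; apply: mulr_ge0.
    by apply: mulr_ge0.
  move=> i j nzij.
  have H : (a * (A * a + B * b) + a <= (a * A + 1) * i + (a * B) * j)%N.
    have := h1 _ _ nzij; have := h2 _ _ nzij.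
    case: (eqVneq (A * a + B * b)%N (A * i + B * j)%N) => [e|ne].
      by move=> /(_ e) hai _; rewrite e; nia.
    move=> _ hle; have hlt : (A * a + B * b < A * i + B * j)%N by rewrite ltn_neqAle ne.
    nia.
  move: H; rewrite -(ler_nat R) !natrD !natrM /c1 => H; lra.
have L3 : forall x y, newton g x y -> A%:R * x + B%:R * y = c1 -> a%:R <= x.
  move=> x y nxy e; have := L2 _ _ nxy.
  have -> : (a%:R * A%:R + 1) * x + a%:R * B%:R * y = a%:R * (A%:R * x + B%:R * y) + x.
    by ring.
  rewrite e; lra.
have e1 : t * (A%:R * x1 + B%:R * y1) + (1 - t) * (A%:R * x2 + B%:R * y2) = c1.
  by rewrite /c1 ex ey; ring.
have [f1 f2] := convex_eq_lb ht (L1 _ _ n1) (L1 _ _ n2) e1.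
have [ex1 ex2] := convex_eq_lb ht (L3 _ _ n1 f1) (L3 _ _ n2 f2) (esym ex).
have hB' : (B%:R : R) != 0 by rewrite pnatr_eq0 -lt0n.
have ey1 : y1 = b%:R by apply: (mulfI hB'); move: f1; rewrite /c1 ex1; lra.
have ey2 : y2 = b%:R by apply: (mulfI hB'); move: f2; rewrite /c1 ex2; lra.
by rewrite ex1 ex2 ey1 ey2.
Qed.

Lemma vertex_not_above_chord x y i1 j1 i2 j2 (t : R) : is_vertex g x y ->
  g i1 j1 != 0 -> g i2 j2 != 0 -> 0 <= t <= 1 ->
  x = t * i1%:R + (1 - t) * i2%:R -> t * j1%:R + (1 - t) * j2%:R < y -> False.
Proof.
move=> [_ hv] n1 n2 ht ex hy.
set sy := t * j1%:R + (1 - t) * j2%:R in hy.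
have N1 := newton_above_chord n1 n2 ht (lexx 0).
have N2 := newton_above_chord n1 n2 ht (c := 2 * (y - sy)) ltac:(lra).
rewrite -ex addr0 -/sy in N1; rewrite -ex -/sy in N2.
have := hv _ _ _ _ (1/2) N1 N2 ltac:(lra) ltac:(lra) ltac:(lra).
move=> [_ e]; lra.
Qed.

Lemma min_weight_vertex (A B : nat) : (0 < B)%N -> (exists i j, g i j != 0) ->
  exists a b, [/\ g a b != 0, is_vertex g a%:R b%:R &
    forall i j, g i j != 0 -> (A * a + B * b <= A * i + B * j)%N].
Proof.
move=> hB [i0 [j0 nz0]].
have [w [[a1 [b1 [nz1 ew]]] wmin]] :
    exists w, (exists i j, g i j != 0 /\ (A * i + B * j)%N = w) /\
      forall w', (exists i j, g i j != 0 /\ (A * i + B * j)%N = w') -> (w <= w')%N.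
  by apply: ex_least_nat; exists (A * i0 + B * j0)%N, i0, j0.
have [a [[b [nzab eab]] amin]] :
    exists a, (exists b, g a b != 0 /\ (A * a + B * b)%N = w) /\
      forall a', (exists b, g a' b != 0 /\ (A * a' + B * b)%N = w) -> (a <= a')%N.
  by apply: ex_least_nat; exists a1, b1.
have low i j : g i j != 0 -> (A * a + B * b <= A * i + B * j)%N.
  by move=> nz; rewrite eab; apply: wmin; exists i, j.
exists a, b; split=> //; apply: vertex_of_lexmin nzab hB low _ => i j nz e.
by apply: amin; exists j; rewrite -e.
Qed.

Lemma z_axis_vertex N : g N 0%N != 0 -> (forall i, g i 0%N != 0 -> (N <= i)%N) ->
  is_vertex g N%:R 0.
Proof.
move=> nz hN; rewrite -(mulr0n 1); apply: (vertex_of_lexmin (A:=0) (B:=1) nz) => //.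
by move=> i j nzij; rewrite !mul0n !mul1n !add0n => /esym j0; apply: hN; rewrite -j0.
Qed.

Lemma newton_quadrant N : g N 0%N != 0 -> (forall i j, g i j != 0 -> (N <= i)%N) ->
  forall x y, newton g x y <-> N%:R <= x /\ 0 <= y.
Proof.
move=> nz hN x y; split.
- move=> nw; split.
  + have := @newton_halfplane 1 0 N%:R ler01 (lexx 0) _ x y nw.
    rewrite mul1r mul0r addr0; apply=> i j /hN.
    by rewrite mul1r mul0r addr0 ler_nat.
  + have := @newton_halfplane 0 1 0 (lexx 0) ler01 _ x y nw.
    rewrite mul0r add0r mul1r; apply=> i j _.
    by rewrite mul0r add0r mul1r.
- move=> [hx hy]; exists 1%N, (fun _ => 1), (fun _ => x), (fun _ => y).
  rewrite !big_ord1 !mul1r; split=> //; split=> //; split=> //.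
  by move=> _; exists N, 0%N.
Qed.

Lemma no_vertex_between a b c : g a b != 0 -> g c 0%N != 0 -> (a < c)%N ->
  (forall i j, g i j != 0 -> (b * c <= b * i + (c - a) * j)%N) ->
  forall x y, is_vertex g x y -> ~ (a%:R < x < c%:R).
Proof.
move=> nzab nzc hac hline x y hv /andP [hx1 hx2].
have hDR : (0 : R) < (c - a)%N%:R by rewrite ltr0n subn_gt0.
have eD : ((c - a)%N%:R : R) = c%:R - a%:R by rewrite natrB // ltnW.
have Lxy : b%:R * c%:R <= b%:R * x + (c - a)%N%:R * y.
  apply: (newton_halfplane (ler0n _ _) (ler0n _ _) _ hv.1) => i j nz.
  by rewrite -!natrM -natrD ler_nat hline.
(* x = t a + (1 - t) c with 0 < t < 1, and then y >= t b *)
pose t := (c%:R - x) / (c - a)%N%:R.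
have tD : t * (c - a)%N%:R = c%:R - x by rewrite /t divfK // gt_eqF.
have t0 : 0 < t by rewrite /t divr_gt0 // subr_gt0.
have t1 : t < 1 by rewrite /t ltr_pdivrMr // mul1r eD; lra.
have ex : x = t * a%:R + (1 - t) * c%:R.
  by rewrite eD mulrBr in tD; rewrite mulrBl mul1r; lra.
have hy : t * b%:R <= y.
  rewrite -(ler_pM2l hDR).
  have : (c - a)%N%:R * (t * b%:R) = b%:R * c%:R - b%:R * x.
    by rewrite mulrA [_ * t]mulrC tD; ring.
  lra.
case: (ltrP (t * b%:R) y) => hy2.
  apply: (vertex_not_above_chord (t:=t) hv nzab nzc) => //.
    by apply/andP; split; lra.
  by rewrite mulr0 addr0.
have ey : y = t * b%:R + (1 - t) * 0%:R.
  by rewrite mulr0 addr0; apply: le_anti; rewrite hy hy2.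
have [ea _] := hv.2 _ _ _ _ t (newton_support nzab) (newton_support nzc)
  ltac:(by apply/andP) ex ey.
by move: hac; rewrite -(ltr_nat R) ea ltxx.
Qed.

Lemma least_slope_point N : (exists i j, g i j != 0 /\ (i < N)%N) ->
  exists a b, [/\ g a b != 0, (a < N)%N,
    forall i j, g i j != 0 -> (i < N)%N -> (b * (N - i) <= j * (N - a))%N &
    forall i j, g i j != 0 -> (i < N)%N -> (b * (N - i) = j * (N - a))%N ->
      (a <= i)%N].
Proof.
move=> [i0 [j0 [nz0 lt0]]].
(* slopes are compared as naturals after scaling by N! *)
pose slope i j := (j * (N`! %/ (N - i)))%N.
have slope_leq a b i j : (a < N)%N -> (i < N)%N ->
    (slope a b <= slope i j)%N = (b * (N - i) <= j * (N - a))%N.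
  move=> ha hi; apply: scaled_slope_leq; rewrite ?fact_gt0 ?subn_gt0 //;
    by rewrite dvdn_fact // subn_gt0 ?ha ?hi leq_subr.
have [k [[a1 [b1 [nz1 ha1 ek1]]] kmin]] :
    exists k, (exists i j, [/\ g i j != 0, (i < N)%N & slope i j = k]) /\
      forall k', (exists i j, [/\ g i j != 0, (i < N)%N & slope i j = k']) -> (k <= k')%N.
  by apply: ex_least_nat; exists (slope i0 j0), i0, j0.
have [a [[b [nzab haN ek]] amin]] :
    exists a, (exists b, [/\ g a b != 0, (a < N)%N & slope a b = k]) /\
      forall a', (exists b, [/\ g a' b != 0, (a' < N)%N & slope a' b = k]) -> (a <= a')%N.
  by apply: ex_least_nat; exists a1, b1.
have least i j : g i j != 0 -> (i < N)%N -> (b * (N - i) <= j * (N - a))%N.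
  by move=> nz hi; rewrite -slope_leq // ek; apply: kmin; exists i, j.
exists a, b; split=> // i j nz hi e; apply: amin; exists j; split=> //.
by apply/eqP; rewrite -ek eqn_leq !slope_leq // e leqnn.
Qed.

Lemma last_edge N : g N 0%N != 0 -> (forall i, g i 0%N != 0 -> (N <= i)%N) ->
  (exists i j, g i j != 0 /\ (i < N)%N) ->
  exists a b, [/\ g a b != 0, (a < N)%N, (0 < b)%N, is_vertex g a%:R b%:R &
    forall x y, is_vertex g x y -> ~ (a%:R < x < N%:R)].
Proof.
move=> nzN hN /least_slope_point [a [b [nzab haN least tie]]].
have hb : (0 < b)%N.
  by rewrite lt0n; apply: contraTneq haN => b0; rewrite -leqNgt hN // -b0.
have hD : (0 < N - a)%N by rewrite subn_gt0.
have splitN i : (i < N)%N -> (b * N = b * i + b * (N - i))%N.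
  by move=> hi; rewrite -mulnDr subnKC // ltnW.
have eN : (b * a + (N - a) * b = b * N)%N by rewrite [((N - a) * b)%N]mulnC (splitN a).
have line i j : g i j != 0 -> (b * N <= b * i + (N - a) * j)%N.
  move=> nz; case: (ltnP i N) => hi.
    by rewrite (splitN i) // leq_add2l [((N - a) * j)%N]mulnC least.
  exact: leq_trans (leq_mul (leqnn b) hi) (leq_addr _ _).
exists a, b; split=> //; last exact: no_vertex_between nzab nzN haN line.
apply: (vertex_of_lexmin (A:=b) (B:=N - a) nzab hD) => i j nz; rewrite eN.
  exact: line.
case: (ltnP i N) => [hi|/(leq_trans (ltnW haN))//].
rewrite (splitN i) // => /eqP; rewrite eqn_add2l [((N - a) * j)%N]mulnC => /eqP.
exact: tie.
Qed.

End NewtonPolygon.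

Section NewtonPolygonOfq.
Variable R : realType.
Variables (q : ser2 R) (s : nat) (nv mv : nat -> nat).
Hypothesis q_vertices : forall x y : R, is_vertex q x y <->
  exists k, [/\ (1 <= k <= s)%N, x = (nv k)%:R & y = (mv k)%:R].
Hypothesis vertices_sorted : forall k, (1 <= k < s)%N ->
  (nv k < nv k.+1)%N /\ (mv k.+1 < mv k)%N.
Hypothesis s_gt1 : (1 < s)%N.
Hypothesis ms0 : mv s = 0%N.
Hypothesis q_neq0 : exists i j, q i j != 0.

Lemma vertices_chain k k' : (1 <= k)%N -> (k < k')%N -> (k' <= s)%N ->
  (nv k < nv k')%N /\ (mv k' < mv k)%N.
Proof.
move=> hk; elim: k' => [//|k' IH] hkk' hk's.
case: (ltngtP k k') => [lt|gt|<-]; last by apply: vertices_sorted; lia.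
- have [a1 a2] := IH lt (ltnW hk's).
  have [b1 b2] := vertices_sorted (k := k') ltac:(lia).
  split; lia.
- lia.
Qed.

Lemma vertex_index a b : is_vertex q a%:R b%:R ->
  exists k, [/\ (1 <= k <= s)%N, a = nv k & b = mv k].
Proof.
move=> /q_vertices [k [hk ea eb]]; exists k.
by split=> //; apply/eqP; rewrite -(eqr_nat R) ?ea ?eb.
Qed.

Lemma last_vertex : is_vertex q (nv s)%:R 0.
Proof. by apply/q_vertices; exists s; rewrite ms0; split=> //; lia. Qed.

(* q contains z^(n_s): the lowest vertex is the last one *)
Lemma q_last_vertex : q (nv s) 0%N != 0.
Proof.
have [a [b [nzab hv bmin]]] := min_weight_vertex 0 (ltn0Sn 0) q_neq0.
have [k [/andP [hk1 hks] ea eb]] := vertex_index hv.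
have b0 : (b <= 0)%N.
  rewrite -(ler_nat R).
  have := newton_halfplane (c := b%:R) (lexx 0) ler01 _ last_vertex.1.
  rewrite mul0r add0r mul1r; apply=> i j /bmin.
  by rewrite mul0r add0r mul1r !mul0n !mul1n !add0n ler_nat.
have ks : k = s.
  apply/eqP; rewrite eqn_leq hks leqNgt; apply/negP => lt.
  by have [_] := vertices_chain hk1 lt (leqnn s); lia.
by move: nzab; rewrite ea ks; have -> : b = 0%N by lia.
Qed.

Lemma q_last_edge_bound i j : q i j != 0 ->
  (mv s.-1 * nv s <= mv s.-1 * i + (nv s - nv s.-1) * j)%N.
Proof.
set M := mv s.-1; set P := (nv s - nv s.-1)%N; set gm := nv s.
have [o1 o2] : (nv s.-1 < gm)%N /\ (mv s < M)%N by apply: vertices_chain; lia.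
have hP : (0 < P)%N by rewrite subn_gt0.
have [a [b [nzab hv wmin]]] := min_weight_vertex M hP q_neq0.
move=> nz; apply: leq_trans (wmin _ _ nz); rewrite leqNgt; apply/negP => lt.
have [k [/andP [hk1 hks] ea eb]] := vertex_index hv.
case: (ltngtP k s.-1) => [klt|kgt|keq].
- (* the vertex (n_(s-1), m_(s-1)) would lie above the chord from (a,b) to (n_s,0) *)
  have hvs : is_vertex q (nv s.-1)%:R M%:R by apply/q_vertices; exists s.-1; split=> //; lia.
  have [c1 _] := vertices_chain hk1 klt ltac:(lia).
  have a_lt : (a < gm)%N by rewrite ea; lia.
  have hD : (0 : R) < (gm - a)%N%:R by rewrite ltr0n subn_gt0.
  have eD : ((gm - a)%N%:R : R) = gm%:R - a%:R by rewrite natrB // ltnW.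
  have eP : (P%:R : R) = gm%:R - (nv s.-1)%:R by rewrite natrB // ltnW.
  have key : (P%:R * b%:R < M%:R * (gm - a)%N%:R :> R).
    by rewrite -!natrM ltr_nat mulnBr ltn_subRL.
  apply: (vertex_not_above_chord (t := P%:R / (gm - a)%N%:R) hvs nzab q_last_vertex).
  + apply/andP; split; first by apply: divr_ge0; [exact: ler0n | exact: ltW].
    by rewrite ler_pdivrMr // mul1r ler_nat; apply: leq_sub2l; rewrite ea ltnW.
  + have tD : P%:R / (gm - a)%N%:R * (gm - a)%N%:R = P%:R :> R by rewrite divfK // gt_eqF.
    move: tD; set t := P%:R / _; rewrite eD eP mulrBr => tD.
    rewrite mulrBl mul1r; lra.
  + by rewrite mulr0 addr0 mulrAC ltr_pdivrMr.
- have ks : k = s by lia.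
  by move: lt; rewrite ea eb ks ms0 muln0 addn0 ltnn.
- move: lt; rewrite ea eb keq -/M; have -> : (gm = nv s.-1 + P)%N by rewrite subnKC // ltnW.
  by rewrite mulnDr [(P * M)%N]mulnC ltnn.
Qed.

End NewtonPolygonOfq.

Lemma yintercept_last_edge (R : realType) (n1 m1 n2 : nat) : (n1 < n2)%N ->
  yintercept (n1%:R : R) m1%:R n2%:R 0%N%:R * (n2 - n1)%N%:R = (m1 * n2)%N%:R.
Proof.
move=> lt; rewrite /yintercept natrB ?natrM; last exact: ltnW.
by field; rewrite subr_eq0 eqr_nat gtn_eqF.
Qed.

Lemma wl_of_wbound (R : realType) (g : ser2 R) (M P N : nat) (l : R) : (0 < M)%N ->
  g N 0%N != 0 -> wbound g M P (M * N) -> P%:R / M%:R <= l -> wl_eq g l N%:R.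
Proof.
move=> hM nzN hg hl; split; first by exists N, 0%N; rewrite mulr0 addr0.
move=> i j /hg; rewrite -(ler_nat R) !natrD !natrM => h.
have hMR : (0 : R) < M%:R by rewrite ltr0n.
have hPl : P%:R * j%:R <= l * M%:R * j%:R.
  by apply: ler_wpM2r => //; rewrite -ler_pdivrMr.
rewrite -(ler_pM2l hMR); lra.
Qed.

Lemma steep_last_edge (R : realType) (g : ser2 R) (M P N : nat) :
  (0 < M)%N -> (0 < P)%N -> g N 0%N != 0 -> wbound g M P (M * N) ->
  (forall a b, g a b != 0 -> (0 < b)%N -> (M * N < M * a + P * b)%N) ->
  (exists i j, g i j != 0 /\ (i < N)%N) ->
  is_vertex g N%:R 0 /\
  exists x' y' : R,
    [/\ is_vertex g x' y', x' < N%:R,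
        (forall x'' y'' : R, is_vertex g x'' y'' -> ~ (x' < x'' < N%:R)) &
        - (y' / (N%:R - x')) < - (P%:R / M%:R)^-1].
Proof.
move=> hM hP nzN hg hstrict left_pt.
have hN i : g i 0%N != 0 -> (N <= i)%N.
  by move=> /hg; rewrite muln0 addn0 leq_pmul2l.
split; first exact: z_axis_vertex.
have [a [b [nzab haN hb hv adj]]] := last_edge nzN hN left_pt.
exists a%:R, b%:R; split=> //; first by rewrite ltr_nat.
have steep : (M * (N - a) < b * P)%N.
  by have := hstrict _ _ nzab hb; rewrite [(b * P)%N]mulnC mulnBr; lia.
rewrite ltrN2 invf_div ltr_pdivrMr ?ltr0n // mulrAC ltr_pdivlMr; last first.
  by rewrite subr_gt0 ltr_nat.
by rewrite -natrB; [rewrite -!natrM ltr_nat | exact: ltnW].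
Qed.

Theorem mainTheorem6 (R : realType) (p : ser1 R) (q : ser2 R) (delta : nat)
    (s : nat) (nv mv : nat -> nat) :
  let T : R := yintercept (nv s.-1)%:R (mv s.-1)%:R (nv s)%:R (mv s)%:R in
  let gamma : nat := nv s in
  let d : nat := mv s in
  let l1 : R := ((nv s)%:R - (nv s.-1)%:R) / ((mv s.-1)%:R - (mv s)%:R) in
  let alpha : R := gamma%:R / (delta%:R - d%:R) in
  let gam (n : nat) : nat := (gamma * delta ^ n.-1)%N in
  (1 <= delta)%N ->
  (forall i, (i < delta)%N -> p i = 0) -> p delta != 0 ->
  convergent1 p -> convergent2 q ->
  q 0%N 0%N = 0 -> (exists i j, q i j != 0) ->
  (forall x y : R, is_vertex q x y <->
     exists k, [/\ (1 <= k <= s)%N, x = (nv k)%:R & y = (mv k)%:R]) ->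
  (forall k, (1 <= k < s)%N -> (nv k < nv k.+1)%N /\ (mv k.+1 < mv k)%N) ->
  (1 < s)%N -> delta%:R <= T ->
  d = 0%N -> delta%:R < T ->
  (forall n, (1 <= n)%N ->
     Qn p q n (gam n) 0%N != 0 /\
     (forall l : R, l1 <= l <= alpha -> wl_eq (Qn p q n) l (gam n)%:R)) /\
  (forall n, (2 <= n)%N ->
     (forall x y : R, newton (Qn p q n) x y <-> (gam n)%:R <= x /\ 0 <= y)
     \/
     (is_vertex (Qn p q n) (gam n)%:R 0 /\
      exists x' y' : R,
        [/\ is_vertex (Qn p q n) x' y', x' < (gam n)%:R,
            (forall x'' y'' : R, is_vertex (Qn p q n) x'' y'' ->
               ~ (x' < x'' < (gam n)%:R)) &
            - (y' / ((gam n)%:R - x')) < - l1^-1])).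
Proof.
move=> T gm d l1 alpha gam dl_gt0 p_low p_lead _ _ _ q_neq0 q_vert sorted s_gt1 _ d0 dl_lt_T.
have [o1 o2] : (nv s.-1 < gm)%N /\ (mv s < mv s.-1)%N.
  by have := sorted s.-1; rewrite prednK; [apply; lia | lia].
have hM : (0 < mv s.-1)%N by lia.
have hP : (0 < nv s - nv s.-1)%N by rewrite subn_gt0.
have hl1 : l1 = (nv s - nv s.-1)%N%:R / (mv s.-1)%:R.
  by rewrite /l1 [mv s]d0 subr0 natrB // ltnW.
(* delta < T_(s-1) in integer form *)
have hT : (delta * (nv s - nv s.-1) < mv s.-1 * gm)%N.
  rewrite -(ltr_nat R) natrM -(yintercept_last_edge R _ o1) -[0%N]d0.
  by rewrite ltr_pM2r ?ltr0n.
have q_lead := q_last_vertex q_vert sorted s_gt1 d0 q_neq0.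
have q_l1 := q_last_edge_bound q_vert sorted s_gt1 d0 q_neq0.
have Qlead := Qn_lead dl_gt0 p_low p_lead hM q_l1 hT q_lead.
have Ql1 m := Qn_l1 dl_gt0 p_low p_lead hM q_l1 hT q_lead (m:=m).
split=> [[|m] // _|[|[|m]] // _].
  split=> [|l /andP [hl _]]; first exact: Qlead.
  by apply: wl_of_wbound hM (Qlead m) (Ql1 m) _; rewrite -hl1.
have Qstrict := Qn_l1_strict dl_gt0 p_low p_lead hM q_l1 hT q_lead (m:=m).
case: (classic (exists i j, Qn p q m.+2 i j != 0 /\ (i < gam m.+2)%N)) => [left_pt|none].
  by right; rewrite hl1; apply: steep_last_edge hM hP (Qlead m.+1) (Ql1 m.+1) Qstrict left_pt.
left; apply: newton_quadrant (Qlead m.+1) _ => i j nz.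
by rewrite leqNgt; apply/negP => lt; apply: none; exists i, j.
Qed.
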